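(* Let $f=a_0+a_1x+\cdots+a_nx^n\in\mathbb{Z}[x]$ be a primitive polynomial. Suppose that $a_0=\pm p^k d$ and $\gcd(a_0,a_1,a_2)=p^k$ for some positive integers $k$ and $d$ and a prime number $p$, where $p\nmid a_3 d$ and $\gcd(k,3)=1$, and that every zero $\theta\in\mathbb{C}$ of $f$ satisfies $|\theta|>d$. Then $f$ is irreducible in $\mathbb{Z}[x]$.
   Context: A polynomial $a_0+a_1x+\cdots+a_nx^n\in\mathbb{Z}[x]$ is primitive if $\gcd(a_0,a_1,\ldots,a_n)=1$. Coefficients $a_i$ with $i>n$ are taken to be $0$. *)

From HB Require Import structures.
From mathcomp Require Import all_boot all_order all_algebra all_field.
Set Implicit Arguments. Unset Strict Implicit. Unset Printing Implicit Defensive.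
Import Order.TTheory GRing.Theory Num.Theory.
Local Open Scope ring_scope.

Definition primitive_intpoly (f : {poly int}) : Prop :=
  (\big[gcdn/0%N]_(i < size f) absz (f`_i)%R)%N = 1%N.

Definition irreducible_in_Zx (f : {poly int}) : Prop :=
  f != 0 /\ f \isn't a GRing.unit /\
  forall g h : {poly int}, f = g * h -> g \is a GRing.unit \/ h \is a GRing.unit.

From HB Require Import structures.
From mathcomp Require Import all_boot all_order all_algebra all_field.
Import Order.TTheory GRing.Theory Num.Theory.
Local Open Scope ring_scope.

(* If f = g h with g, h nonconstant, then |g(0)| is at least the product of the moduli of
   the roots of g, which are roots of f, so |g(0)| > d, and likewise |h(0)| > d.  As
   g(0) h(0) = +-p^k d with p coprime to d, p divides both constant terms, say with p-adic
   valuations i, j >= 1 and i + j = k.  Modulo p we then have a_2 = g_1 h_1 and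
   a_3 = g_1 h_2 + g_2 h_1, so, up to swapping g and h, p divides h_1 but neither g_1 nor h_2.
   Since p^k divides a_1 = g_0 h_1 + g_1 h_0, both terms have the same valuation j, whence
   v(h_1) = j - i; since p^k divides a_2 = g_0 h_2 + g_1 h_1 + g_2 h_0, whose terms have
   valuations i, j - i and at least j, we get i = j - i.  Thus k = 3i, contradicting
   gcd(k, 3) = 1. *)

Lemma unitz_absz (c : int) : (c \is a GRing.unit) = (`|c|%N == 1%N).
Proof. by case: c => [[|[|n]]|[|n]]. Qed.

Lemma primitive_intpoly_const_factor {f g h : {poly int}} :
  primitive_intpoly f -> f = g * h -> (size g <= 1)%N -> g \is a GRing.unit.
Proof.
move=> prim_f fgh /size1_polyC Dg; move: fgh; rewrite Dg; set c := g`_0 => fgh.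
have c_dvd1 : (`|c| %| 1)%N.
  rewrite -prim_f; apply/dvdn_biggcdP => i _; move: (val i) => n.
  by rewrite fgh coefCM abszM dvdn_mulr.
have absc : `|c|%N = 1%N by apply/eqP; rewrite -dvdn1.
by rewrite poly_unitE size_polyC coefC /= unitz_absz absc -absz_gt0 absc.
Qed.

Lemma prod_norm_gt (r : algC) (s : seq algC) : 1 <= r -> s != [::] ->
  (forall z, z \in s -> r < `|z|) -> r < \prod_(z <- s) `|z|.
Proof.
case: s => [//|z s] r_ge1 _ gt_r; rewrite big_cons.
have prod_ge1 : 1 <= \prod_(w <- s) `|w|.
  rewrite big_seq; apply: (big_ind (fun x => 1 <= x)) => //; first exact: mulr_ege1.
  by move=> w ws; rewrite (le_trans r_ge1) // ltW // gt_r // inE ws orbT.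
exact: lt_le_trans (gt_r z (mem_head z s)) (ler_peMr _ prod_ge1).
Qed.

Lemma coef0_norm_gt (G : {poly algC}) (r : algC) :
  1 <= r -> 1 <= `|lead_coef G| -> (1 < size G)%N ->
  (forall z, root G z -> r < `|z|) -> r < `|G`_0|.
Proof.
move=> r_ge1 lc_ge1 size_G gt_r.
have [s DG] := closed_field_poly_normal G.
have lc_neq0 : lead_coef G != 0 by rewrite lead_coef_eq0 -size_poly_eq0 -lt0n ltnW.
have s_neq0 : s != [::].
  by apply: contraTneq size_G => s0; rewrite DG s0 big_nil alg_polyC size_polyC lc_neq0.
rewrite -horner_coef0 DG hornerZ horner_prod normrM normr_prod.
under eq_bigr do rewrite hornerXsubC sub0r normrN.
apply: lt_le_trans (ler_peMl (prodr_ge0 _ _) lc_ge1) => //.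
apply: prod_norm_gt => // z zs; apply: gt_r.
by rewrite DG rootZ // root_prod_XsubC.
Qed.

Lemma intpoly_coef0_gt (g : {poly int}) (d : nat) : (0 < d)%N -> (1 < size g)%N ->
  (forall z : algC, root (map_poly intr g) z -> d%:R < `|z|) -> (d < `|(g`_0)%R|)%N.
Proof.
move=> d_gt0 size_g gt_d.
have := @coef0_norm_gt (map_poly (intr : int -> algC) g) d%:R _ _ _ gt_d.
rewrite coef_map /= -intr_norm -natr_absz ltr_nat; apply; first by rewrite ler1n.
- rewrite lead_coef_map_inj //; last exact: intr_inj.
  by rewrite -intr_norm ler1z -gtz0_ge1 normr_gt0 lead_coef_eq0 -size_poly_eq0 -lt0n ltnW.
- by rewrite size_map_inj_poly //; exact: intr_inj.
Qed.

Lemma irreducible_in_Zx_primitive (f : {poly int}) :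
  primitive_intpoly f -> f \isn't a GRing.unit ->
  (forall g h, f = g * h -> (1 < size g)%N -> (1 < size h)%N -> False) ->
  irreducible_in_Zx f.
Proof.
move=> prim_f nunit_f no_split; split; last split=> // g h fgh.
  by apply/eqP => f0; move: prim_f; rewrite f0 /primitive_intpoly size_poly0 big_ord0.
have [size_g | size_g] := leqP (size g) 1.
  by left; exact: primitive_intpoly_const_factor prim_f fgh size_g.
have [size_h | size_h] := leqP (size h) 1.
  by right; apply: (primitive_intpoly_const_factor (h := g) prim_f _ size_h); rewrite mulrC.
by case: (no_split g h fgh size_g size_h).
Qed.

Lemma coef1M (R : nzRingType) (g h : {poly R}) : (g * h)`_1 = g`_0 * h`_1 + g`_1 * h`_0.
Proof. by rewrite coefM !big_ord_recr big_ord0 /= add0r. Qed.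

Lemma coef2M (R : nzRingType) (g h : {poly R}) :
  (g * h)`_2 = g`_0 * h`_2 + g`_1 * h`_1 + g`_2 * h`_0.
Proof. by rewrite coefM !big_ord_recr big_ord0 /= add0r. Qed.

Lemma coef3M (R : nzRingType) (g h : {poly R}) :
  (g * h)`_3 = g`_0 * h`_3 + g`_1 * h`_2 + g`_2 * h`_1 + g`_3 * h`_0.
Proof. by rewrite coefM !big_ord_recr big_ord0 /= add0r. Qed.

(* zlogn p 0 = 0 is a junk value, hence the nonzero hypotheses below. *)
Definition zlogn (p : nat) (x : int) : nat := logn p `|x|.

Section PAdicValuation.

Context {p : nat} (p_pr : prime p).

Lemma dvdz_pexpE e x : x != 0 -> ((p ^ e)%N%:Z %| x)%Z = (e <= zlogn p x)%N.
Proof. by move=> x_neq0; rewrite dvdzE /= pfactor_dvdn // absz_gt0. Qed.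

Lemma zlognM x y : x != 0 -> y != 0 -> zlogn p (x * y) = (zlogn p x + zlogn p y)%N.
Proof. by move=> x_neq0 y_neq0; rewrite /zlogn abszM lognM // absz_gt0. Qed.

Lemma zlogn_eq0 x : ~~ (p%:Z %| x)%Z -> zlogn p x = 0%N.
Proof. by rewrite dvdzE => ndvd_x; rewrite /zlogn logn_coprime // prime_coprime. Qed.

Lemma zlogn_gt0 x : x != 0 -> (p%:Z %| x)%Z -> (0 < zlogn p x)%N.
Proof. by move=> x_neq0; rewrite -dvdz_pexpE // expn1. Qed.

Lemma Euclid_dvdzM x y : (p%:Z %| x * y)%Z = (p%:Z %| x)%Z || (p%:Z %| y)%Z.
Proof. by rewrite !dvdzE abszM Euclid_dvdM. Qed.

Lemma prime_dvdn_of_dvdn_pexpM k d x :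
  (x %| p ^ k * d)%N -> ~~ (p %| d)%N -> (d < x)%N -> (p %| x)%N.
Proof.
move=> dvd_x ndvd_d; apply: contraLR => ndvd_x; rewrite -leqNgt dvdn_leq //.
  by rewrite lt0n; apply: contraNneq ndvd_d => ->; exact: dvdn0.
by rewrite -(@Gauss_dvdr _ (p ^ k)) // coprimeXr // coprime_sym prime_coprime.
Qed.

Lemma zlogn_eq_of_dvdz_add e x y : x != 0 -> (zlogn p x < e)%N ->
  ((p ^ e)%N%:Z %| x + y)%Z -> y != 0 /\ zlogn p y = zlogn p x.
Proof.
move=> x_neq0 lt_x_e dvd_xy.
have dvd_yE n : (n <= e)%N -> ((p ^ n)%N%:Z %| y)%Z = ((p ^ n)%N%:Z %| x)%Z.
  move=> le_n_e; have dvd_n : ((p ^ n)%N%:Z %| x + y)%Z.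
    by apply: dvdz_trans dvd_xy; rewrite dvdzE /= dvdn_exp2l.
  apply/idP/idP => [dvd_y | dvd_x]; first by rewrite -(rpredDr _ dvd_y).
  by rewrite -(rpredDl _ dvd_x).
have y_neq0 : y != 0.
  by apply: contraTneq lt_x_e => y0; rewrite -leqNgt -dvdz_pexpE // -dvd_yE // y0 dvdz0.
have := dvd_yE _ (ltnW lt_x_e); have := dvd_yE _ lt_x_e.
rewrite !dvdz_pexpE // leqnn ltnn => /negbT; rewrite -leqNgt => le_yx le_xy.
by split=> //; apply/eqP; rewrite eqn_leq le_yx le_xy.
Qed.

Lemma zlogn_addr x y : x != 0 -> ((p ^ (zlogn p x).+1)%N%:Z %| y)%Z ->
  zlogn p (x + y) = zlogn p x.
Proof.
move=> x_neq0 dvd_y.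
have dvd_sum : ((p ^ (zlogn p x).+1)%N%:Z %| x + - (x + y))%Z.
  by rewrite opprD addrA subrr add0r rpredN.
have [_ <-] := zlogn_eq_of_dvdz_add _ _ _ x_neq0 (ltnSn _) dvd_sum.
by rewrite /zlogn abszN.
Qed.

Lemma zlogn_coef0_double (g h : {poly int}) :
  g`_0 != 0 -> h`_0 != 0 -> (0 < zlogn p g`_0)%N ->
  ~~ (p%:Z %| g`_1)%Z -> (p%:Z %| h`_1)%Z -> ~~ (p%:Z %| h`_2)%Z ->
  ((p ^ zlogn p (g * h)`_0)%N%:Z %| (g * h)`_1)%Z ->
  ((p ^ zlogn p (g * h)`_0)%N%:Z %| (g * h)`_2)%Z ->
  zlogn p h`_0 = (zlogn p g`_0).*2.
Proof.
move=> g0_neq0 h0_neq0 i_gt0 ndvd_g1 dvd_h1 ndvd_h2.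
rewrite coef0M zlognM // coef1M coef2M.
set i := zlogn p g`_0; set j := zlogn p h`_0 => dvd_f1 dvd_f2.
have g1_neq0 : g`_1 != 0 by apply: contraNneq ndvd_g1 => ->; exact: dvdz0.
have h2_neq0 : h`_2 != 0 by apply: contraNneq ndvd_h2 => ->; exact: dvdz0.
have [g0h1_neq0 v_g0h1] : g`_0 * h`_1 != 0 /\ zlogn p (g`_0 * h`_1) = j.
  have v_g1h0 : zlogn p (g`_1 * h`_0) = j by rewrite zlognM // zlogn_eq0.
  rewrite -v_g1h0; apply: (@zlogn_eq_of_dvdz_add (i + j)%N) => //.
  - exact: mulf_neq0.
  - by rewrite v_g1h0 -{1}(add0n j) ltn_add2r.
  - by rewrite addrC.
have h1_neq0 : h`_1 != 0 by apply: contraNneq g0h1_neq0 => ->; rewrite mulr0.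
have lt_ij : (i < j)%N.
  by rewrite -v_g0h1 zlognM // -{1}(addn0 i) ltn_add2l zlogn_gt0.
have v_g1h1 : zlogn p (g`_1 * h`_1) = (j - i)%N.
  by rewrite -v_g0h1 !zlognM // zlogn_eq0 // addKn.
have v_g0h2_g2h0 : zlogn p (g`_0 * h`_2 + g`_2 * h`_0) = i.
  have v_g0h2 : zlogn p (g`_0 * h`_2) = i by rewrite zlognM // (zlogn_eq0 _ ndvd_h2) addn0.
  by rewrite -v_g0h2 zlogn_addr ?mulf_neq0 // v_g0h2 dvdz_mull // dvdz_pexpE.
have lt_g1h1 : (zlogn p (g`_1 * h`_1) < i + j)%N.
  by rewrite v_g1h1 (leq_ltn_trans (leq_subr i j)) // -{1}(add0n j) ltn_add2r.
have dvd_sum : ((p ^ (i + j))%N%:Z %| g`_1 * h`_1 + (g`_0 * h`_2 + g`_2 * h`_0))%Z.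
  by rewrite addrCA addrA.
have [_] := zlogn_eq_of_dvdz_add _ _ _ (mulf_neq0 g1_neq0 h1_neq0) lt_g1h1 dvd_sum.
by rewrite v_g0h2_g2h0 v_g1h1 -addnn => {1}->; rewrite subnK // ltnW.
Qed.

Lemma ndvdz_coef3M (g h : {poly int}) :
  (p%:Z %| g`_0)%Z -> (p%:Z %| h`_0)%Z -> (p%:Z %| h`_1)%Z -> ~~ (p%:Z %| (g * h)`_3)%Z ->
  ~~ (p%:Z %| g`_1)%Z /\ ~~ (p%:Z %| h`_2)%Z.
Proof.
move=> dvd_g0 dvd_h0 dvd_h1; rewrite coef3M.
rewrite (rpredDr _ (dvdz_mull _ dvd_h0)) (rpredDr _ (dvdz_mull _ dvd_h1)).
by rewrite (rpredDl _ (dvdz_mulr _ dvd_g0)) Euclid_dvdzM negb_or => /andP.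
Qed.

Lemma dvdn3_zlogn_coef0M (g h : {poly int}) : (g * h)`_0 != 0 ->
  (p%:Z %| g`_0)%Z -> (p%:Z %| h`_0)%Z ->
  ((p ^ zlogn p (g * h)`_0)%N%:Z %| (g * h)`_1)%Z ->
  ((p ^ zlogn p (g * h)`_0)%N%:Z %| (g * h)`_2)%Z ->
  ~~ (p%:Z %| (g * h)`_3)%Z ->
  (3 %| zlogn p (g * h)`_0)%N.
Proof.
wlog dvd_h1 : g h / (p%:Z %| h`_1)%Z.
  move=> main f0_neq0 dvd_g0 dvd_h0 dvd_f1 dvd_f2 ndvd_f3.
  have dvd_f2p : (p%:Z %| (g * h)`_2)%Z.
    apply: dvdz_trans dvd_f2; rewrite dvdzE /= dvdn_exp ?zlogn_gt0 //.
    by rewrite coef0M dvdz_mull.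
  have : (p%:Z %| g`_1 * h`_1)%Z.
    move: dvd_f2p; rewrite coef2M (rpredDr _ (dvdz_mull _ dvd_h0)).
    by rewrite (rpredDl _ (dvdz_mulr _ dvd_g0)).
  rewrite Euclid_dvdzM => /orP[dvd_g1 | dvd_h1]; last exact: main.
  by rewrite mulrC; apply: main; rewrite // mulrC.
move=> f0_neq0 dvd_g0 dvd_h0 dvd_f1 dvd_f2 ndvd_f3.
have /andP[g0_neq0 h0_neq0] : (g`_0 != 0) && (h`_0 != 0).
  by rewrite -negb_or -mulf_eq0 -coef0M.
have [ndvd_g1 ndvd_h2] := ndvdz_coef3M _ _ dvd_g0 dvd_h0 dvd_h1 ndvd_f3.
have := zlogn_coef0_double _ _ g0_neq0 h0_neq0 (zlogn_gt0 _ g0_neq0 dvd_g0)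
  ndvd_g1 dvd_h1 ndvd_h2 dvd_f1 dvd_f2.
by rewrite coef0M zlognM // => ->; rewrite -muln2 -mulnS dvdn_mull.
Qed.
End PAdicValuation.

Lemma prime_dvdz_coef0_factor {f g h : {poly int}} {p k d : nat} :
  prime p -> (0 < d)%N -> ~~ (p %| d)%N -> `|(f`_0)%R|%N = (p ^ k * d)%N ->
  f = g * h -> (1 < size g)%N ->
  (forall z : algC, root (map_poly intr f) z -> d%:R < `|z|) -> (p%:Z %| g`_0)%Z.
Proof.
move=> p_pr d_gt0 ndvd_d abs_f0 fgh size_g roots_gt_d.
rewrite dvdzE; apply: (prime_dvdn_of_dvdn_pexpM p_pr k d _ _ ndvd_d).
  by rewrite -abs_f0 fgh coef0M abszM dvdn_mulr.
apply: intpoly_coef0_gt _ _ d_gt0 size_g _ => z rz; apply: roots_gt_d.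
by rewrite fgh rmorphM rootM rz.
Qed.

Theorem theorem24 (f : {poly int}) (p k d : nat) :
  primitive_intpoly f ->
  prime p -> (0 < k)%N -> (0 < d)%N ->
  (f`_0 = (p ^ k * d)%N%:Z \/ f`_0 = - (p ^ k * d)%N%:Z) ->
  gcdn (gcdn (absz (f`_0)%R) (absz (f`_1)%R)) (absz (f`_2)%R) = (p ^ k)%N ->
  ~~ (p %| (absz (f`_3)%R) * d)%N ->
  gcdn k 3 = 1%N ->
  (forall theta : algC, root (map_poly intr f) theta -> (d%:R < `|theta|)) ->
  irreducible_in_Zx f.
Proof.
move=> prim_f p_pr k_gt0 d_gt0 f0E gcd_f012 ndvd_f3d coprime_k3 roots_gt_d.
rewrite Euclid_dvdM // negb_or in ndvd_f3d; case/andP: ndvd_f3d => ndvd_f3 ndvd_d.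
have abs_f0 : `|(f`_0)%R|%N = (p ^ k * d)%N by case: f0E => ->; rewrite ?abszN.
have f0_gt1 : (1 < p ^ k * d)%N.
  exact: leq_trans (leq_ltn_trans k_gt0 (ltn_expl _ (prime_gt1 p_pr))) (leq_pmulr _ d_gt0).
have f0_neq0 : f`_0 != 0 by rewrite -absz_gt0 abs_f0 ltnW.
have v_f0 : zlogn p f`_0 = k.
  rewrite /zlogn abs_f0 lognM ?d_gt0 ?expn_gt0 ?prime_gt0 // pfactorK //.
  by rewrite logn_coprime ?addn0 // prime_coprime.
apply: irreducible_in_Zx_primitive => // [|g h fgh size_g size_h].
  by rewrite poly_unitE unitz_absz abs_f0 (gtn_eqF f0_gt1) andbF.
have dvd_g0 := prime_dvdz_coef0_factor p_pr d_gt0 ndvd_d abs_f0 fgh size_g roots_gt_d.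
have dvd_h0 : (p%:Z %| h`_0)%Z.
  apply: (prime_dvdz_coef0_factor (h := g) p_pr d_gt0 ndvd_d abs_f0 _ size_h roots_gt_d).
  by rewrite mulrC.
have dvd3_k : (3 %| k)%N.
  rewrite -v_f0 fgh; apply: dvdn3_zlogn_coef0M; rewrite -?fgh ?v_f0 ?dvdzE //.
  - by rewrite -gcd_f012 (dvdn_trans (dvdn_gcdl _ _)) ?dvdn_gcdr.
  - by rewrite -gcd_f012 dvdn_gcdr.
by move: coprime_k3; rewrite (gcdn_idPr dvd3_k).
Qed.
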